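(* Let $F=\frac19\begin{pmatrix}1&1&1\\1&1&1\\1&1&1\end{pmatrix}$ (box blur filter). Then the equation $F*X=B$ with the zero boundary condition, for unknown $X\in\mathbb{R}^{m\times n}$, has a unique solution for every $B\in\mathbb{R}^{m\times n}$ if and only if $m,n\notin\{3l-1: l\in\mathbb{N}\}$.
   Context: $\mathbb{N}=\{1,2,3,\dots\}$. For $F=[f_{ij}]\in\mathbb{R}^{3\times3}$ and $X=[x_{ij}]\in\mathbb{R}^{m\times n}$, the convolution $F*X\in\mathbb{R}^{m\times n}$ is defined by $[F*X]_{ij}=\sum_{l_1=1}^3\sum_{l_2=1}^3 f_{l_1l_2}\,x_{i-l_1+2,\,j-l_2+2}$ for $1\le i\le m$, $1\le j\le n$, where under the zero boundary condition all values $x_{ij}$ with $i\in\{0,m+1\}$ or $j\in\{0,n+1\}$ are $0$. *)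

From Stdlib Require Import Reals.
From mathcomp Require Import all_boot all_order all_algebra.
From mathcomp Require Import Rstruct.
Set Implicit Arguments. Unset Strict Implicit. Unset Printing Implicit Defensive.
Import GRing.Theory Num.Theory.
Local Open Scope ring_scope.

(* Zero-extension of X : m x n matrix to integer indices (0-based):
   entries outside 0..m-1 / 0..n-1 are 0 (zero boundary condition). *)
Definition zext (m n : nat) (X : 'M[R]_(m, n)) (i j : int) : R :=
  match i, j with
  | Posz i', Posz j' =>
      match @insub nat (fun k => (k < m)%N) 'I_m i',
            @insub nat (fun k => (k < n)%N) 'I_n j' with
      | Some a, Some b => X a b
      | _, _ => 0
      end
  | _, _ => 0
  end.

(* [F*X]_{ij} = sum_{l1,l2=1..3} f_{l1 l2} x_{i-l1+2, j-l2+2}  (1-based);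
   0-based: l1,l2 in 0..2, row index i - l1 + 1, column index j - l2 + 1. *)
Definition conv3 (m n : nat) (F : 'M[R]_3) (X : 'M[R]_(m, n)) : 'M[R]_(m, n) :=
  \matrix_(i < m, j < n)
    \sum_(l1 < 3) \sum_(l2 < 3)
      F l1 l2 * zext X (i%:Z - l1%:Z + 1) (j%:Z - l2%:Z + 1).

Definition box_blur : 'M[R]_3 := \matrix_(i < 3, j < 3) (9%:R)^-1.

(* The box blur is separable: F * X = (1/9) T_m X T_n, where T_k is the k x k
   tridiagonal matrix of ones, so X |-> F * X is a bijection iff T_m and T_n are
   invertible.  A vector x in the kernel of T_k, extended by x_(-1) = x_k = 0,
   satisfies x_(i-1) + x_i + x_(i+1) = 0 for 0 <= i < k, hence is x_0 times the
   3-periodic sequence 1, -1, 0, 1, -1, 0, ...; the condition x_k = 0 then allows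
   x_0 <> 0 exactly when k = 2 (mod 3), i.e. k = 3l - 1. *)

From Stdlib Require Import Reals.
From mathcomp Require Import all_boot all_order all_algebra.
From mathcomp Require Import Rstruct.
From mathcomp Require Import ring zify.
Set Implicit Arguments. Unset Strict Implicit. Unset Printing Implicit Defensive.
Import Order.TTheory GRing.Theory Num.Theory.
Local Open Scope ring_scope.

Section TwoSidedProduct.
Variable F : fieldType.

Lemma mulmx2_inj_unitmx_r m n (A : 'M[F]_m) (C : 'M[F]_n) : (0 < m)%N ->
  (forall X : 'M_(m, n), A *m X *m C = 0 -> X = 0) -> C \in unitmx.
Proof.
move=> m_gt0 injAC; rewrite -row_free_unit; apply: inj_row_free => v vC0.
have /matrixP/(_ (Ordinal m_gt0)) : const_mx 1 *m v = 0 :> 'M_(m, n).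
  by apply: injAC; rewrite -!mulmxA vC0 !mulmx0.
by move=> v0; apply/rowP => j; have := v0 j; rewrite !mxE big_ord1 mxE mul1r.
Qed.

Lemma mulmx2_inj_unitmx_l m n (A : 'M[F]_m) (C : 'M[F]_n) : (0 < n)%N ->
  (forall X : 'M_(m, n), A *m X *m C = 0 -> X = 0) -> A \in unitmx.
Proof.
move=> n_gt0 injAC; rewrite -unitmx_tr; apply: (@mulmx2_inj_unitmx_r n m C^T) => // X XA0.
apply: trmx_inj; rewrite trmx0; apply: injAC.
by rewrite -[A]trmxK -[C]trmxK -!trmx_mul mulmxA XA0 trmx0.
Qed.

Lemma exists_unique_mulmx2_iff m n (A : 'M[F]_m) (C : 'M[F]_n) :
  (0 < m)%N -> (0 < n)%N ->
  (forall B : 'M_(m, n), exists! X, A *m X *m C = B) <-> A \in unitmx /\ C \in unitmx.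
Proof.
move=> m_gt0 n_gt0; split=> [bij | [uA uC] B].
  have injAC X : A *m X *m C = 0 -> X = 0.
    have [X0 [_ uniqX0]] := bij 0.
    by move=> AXC0; rewrite -(uniqX0 _ AXC0) (uniqX0 0) // mulmx0 mul0mx.
  by split; [apply: mulmx2_inj_unitmx_l injAC | apply: mulmx2_inj_unitmx_r injAC].
exists (invmx A *m B *m invmx C); split=> [|X <-].
  by rewrite !mulmxA mulmxV // mul1mx -mulmxA mulVmx // mulmx1.
by rewrite mulmxA mulKmx // mulmxK.
Qed.

End TwoSidedProduct.

Section TridiagonalOnes.
Variable F : fieldType.

Definition tridiag_ones k : 'M[F]_k := \matrix_(i, j) ((i <= j.+1) && (j <= i.+1))%N%:R.

Lemma tridiag_ones_sym k (i j : 'I_k) : tridiag_ones k i j = tridiag_ones k j i.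
Proof. by rewrite !mxE andbC. Qed.

Lemma tridiag_onesE k (i j : 'I_k) :
  tridiag_ones k i j = \sum_(l < 3) (j%:Z == i%:Z - l%:Z + 1)%:R.
Proof. by rewrite mxE !big_ord_recr big_ord0 /= add0r -!natrD; congr _%:R; lia. Qed.

Definition zext1 k (u : 'I_k -> F) (z : int) : F := \sum_(a < k) (a%:Z == z)%:R * u a.

Lemma zext1E k (u : 'I_k -> F) (a : 'I_k) : zext1 u a = u a.
Proof.
rewrite /zext1 (bigD1 a) //= eqxx mul1r big1 ?addr0 // => b /negbTE ba.
by rewrite eqz_nat (inj_eq val_inj) ba mul0r.
Qed.

Lemma zext1_out k (u : 'I_k -> F) (z : int) : ((z < 0) || (k%:Z <= z))%R -> zext1 u z = 0.
Proof.
move=> z_out; rewrite /zext1 big1 // => a _.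
by rewrite (_ : (a%:Z == z) = false) ?mul0r //; have := ltn_ord a; lia.
Qed.

Lemma tridiag_ones_mulr k (u : 'I_k -> F) (i : 'I_k) :
  \sum_(a < k) tridiag_ones k i a * u a = \sum_(l < 3) zext1 u (i%:Z - l%:Z + 1).
Proof. by under eq_bigr do rewrite tridiag_onesE mulr_suml; apply: exchange_big. Qed.

Lemma tridiag_ones_mulE k (v : 'rV[F]_k) (i : 'I_k) :
  (v *m tridiag_ones k) 0 i =
    zext1 (v 0) (i%:Z + 1) + zext1 (v 0) i + zext1 (v 0) (i%:Z - 1).
Proof.
rewrite mxE; under eq_bigr do rewrite mulrC tridiag_ones_sym.
rewrite tridiag_ones_mulr !big_ord_recr big_ord0 /= add0r.
by congr (_ + _ + _); congr zext1; lia.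
Qed.

Lemma zext1_mulmx k m n (A : 'M[F]_(k, m)) (Y : 'M[F]_(m, n)) (i : 'I_k) (z : int) :
  zext1 ((A *m Y) i) z = \sum_(a < m) A i a * zext1 (Y a) z.
Proof.
rewrite /zext1; under eq_bigr do rewrite mxE mulr_sumr.
rewrite exchange_big; apply: eq_bigr => a _; rewrite mulr_sumr.
by apply: eq_bigr => b _; apply: mulrCA.
Qed.

Definition ker_seq (z : int) : F := [:: 1; -1; 0]`_(absz (z %% 3)%Z).

Lemma ker_seqD (z : int) : ker_seq (z + 1) + ker_seq z + ker_seq (z - 1) = 0.
Proof.
rewrite /ker_seq; have : (z %% 3 = 0 \/ z %% 3 = 1 \/ z %% 3 = 2)%Z by lia.
case=> [z3|[z3|z3]].
- have [-> ->] : ((z + 1) %% 3 = 1 /\ (z - 1) %% 3 = 2)%Z by lia.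
  by rewrite z3 /=; ring.
- have [-> ->] : ((z + 1) %% 3 = 2 /\ (z - 1) %% 3 = 0)%Z by lia.
  by rewrite z3 /=; ring.
- have [-> ->] : ((z + 1) %% 3 = 0 /\ (z - 1) %% 3 = 1)%Z by lia.
  by rewrite z3 /=; ring.
Qed.

Lemma ker_seq_m1 : ker_seq (-1) = 0. Proof. by []. Qed.

Lemma ker_seq_nat_eq0 (k : nat) : (ker_seq k == 0) = (k %% 3 == 2)%N.
Proof.
rewrite /ker_seq modz_nat absz_nat.
case: (k %% 3)%N (ltn_pmod k (isT : (0 < 3)%N)) => [|[|[|r]]] //= _;
  by rewrite ?eqxx ?oppr_eq0 ?oner_eq0.
Qed.

Lemma ker_seq_rec (f : int -> F) (k : nat) : f (-1) = 0 ->
  (forall i : nat, (i < k)%N -> f (i%:Z + 1) + f i + f (i%:Z - 1) = 0) ->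
  forall j : nat, (j <= k)%N -> f j = f 0 * ker_seq j.
Proof.
move=> f_m1 rec.
suff fE n : (n <= k)%N -> f (n%:Z - 1) = f 0 * ker_seq (n%:Z - 1) /\ f n = f 0 * ker_seq n.
  by move=> j /fE[].
elim: n => [|n IH] nk; first by rewrite f_m1 ker_seq_m1 mulr0 /ker_seq mulr1.
have [fn1 fn] := IH (ltnW nk).
have -> : n.+1%:Z = n%:Z + 1 by lia.
rewrite addrK; split=> //.
by rewrite -[LHS]subr0 -(rec n nk) fn fn1 -[ker_seq (n%:Z + 1)]subr0 -(ker_seqD n); ring.
Qed.

Lemma row_free_tridiag_ones (k : nat) : ker_seq k != 0 -> row_free (tridiag_ones k).
Proof.
move=> ker_k; apply: inj_row_free => v vT0.
have rows (i : nat) : (i < k)%N ->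
    zext1 (v 0) (i%:Z + 1) + zext1 (v 0) i + zext1 (v 0) (i%:Z - 1) = 0.
  by move=> ik; rewrite -(tridiag_ones_mulE v (Ordinal ik)) vT0 mxE.
have vE := ker_seq_rec (zext1_out (v 0) (z := -1) isT) rows.
have v00 : zext1 (v 0) 0 = 0.
  apply/eqP; move: (vE k (leqnn k)); rewrite zext1_out ?lexx ?orbT // => /esym/eqP.
  by rewrite mulf_eq0 (negbTE ker_k) orbF.
by apply/rowP => a; rewrite mxE -zext1E vE ?v00 ?mul0r // ltnW.
Qed.

Lemma ker_seq_mul_tridiag_ones (k : nat) :
  ker_seq k = 0 -> (\row_(a < k) ker_seq a) *m tridiag_ones k = 0.
Proof.
set v := \row_(a < k) _ => ker_k.
have ext_v z : (-1 <= z <= k%:Z)%R -> zext1 (v 0) z = ker_seq z.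
  case/andP; rewrite le_eqVlt => /predU1P[<- _|z_ge]; first by rewrite zext1_out.
  rewrite le_eqVlt => /predU1P[->|z_lt]; first by rewrite zext1_out ?lexx ?orbT.
  have [j -> j_lt] : exists2 j : nat, z = j & (j < k)%N by exists (absz z); lia.
  by rewrite (zext1E (v 0) (Ordinal j_lt)) mxE.
apply/rowP => i; rewrite tridiag_ones_mulE !ext_v ?ker_seqD ?mxE //;
  have := ltn_ord i; lia.
Qed.

Lemma unitmx_tridiag_ones k : (tridiag_ones k \in unitmx) = (k %% 3 != 2)%N.
Proof.
rewrite -row_free_unit -ker_seq_nat_eq0; apply/idP/idP; last exact: row_free_tridiag_ones.
apply: contraL => /eqP ker_k.
have k_gt0 : (0 < k)%N by move/eqP: ker_k; rewrite ker_seq_nat_eq0; case: k.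
apply/negP => T_free.
move/eqP: (ker_seq_mul_tridiag_ones ker_k); rewrite mulmx_free_eq0 //.
by move/eqP/rowP/(_ (Ordinal k_gt0)); rewrite !mxE => /eqP; rewrite ker_seq_nat_eq0.
Qed.

End TridiagonalOnes.

Arguments tridiag_ones {F} k.
Arguments ker_seq {F} z.

Lemma zextE m n (X : 'M[R]_(m, n)) (a b : int) :
  zext X a b = zext1 (fun i => zext1 (X i) b) a.
Proof.
case: a => a; last by rewrite zext1_out.
case: b => b; last by rewrite /zext {1}/zext1 big1 // => i _; rewrite zext1_out ?mulr0.
rewrite /zext; case: insubP => [i _ <- | a_out].
  2: by rewrite zext1_out // lez_nat leqNgt a_out.
case: insubP => [j _ <- | b_out]; first by rewrite !zext1E.
by rewrite zext1E zext1_out // lez_nat leqNgt b_out.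
Qed.

Lemma conv3_box_blurE m n (X : 'M[R]_(m, n)) :
  conv3 box_blur X = (9%:R^-1 *: tridiag_ones m) *m X *m tridiag_ones n.
Proof.
apply/matrixP => i j; rewrite -!scalemxAl [RHS]mxE [in RHS]mxE.
under [in RHS]eq_bigr do rewrite mulrC tridiag_ones_sym.
rewrite tridiag_ones_mulr mulr_sumr mxE exchange_big; apply: eq_bigr => l2 _.
rewrite zext1_mulmx tridiag_ones_mulr mulr_sumr; apply: eq_bigr => l1 _.
by rewrite !mxE zextE.
Qed.

Lemma modn3_neq2_iff (k : nat) :
  (forall l : nat, (0 < l)%N -> k <> (3 * l - 1)%N) <-> (k %% 3 != 2)%N.
Proof.
split=> [k_ne | /eqP k3 l l_gt0 k_eq]; last by lia.
by apply/eqP => k3; apply: (k_ne (k %/ 3).+1); lia.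
Qed.

Theorem corollary1 (m n : nat) (Hm : (0 < m)%N) (Hn : (0 < n)%N) :
  (forall B : 'M[R]_(m, n), exists! X : 'M[R]_(m, n), conv3 box_blur X = B) <->
  ((forall l : nat, (0 < l)%N -> m <> (3 * l - 1)%N) /\
   (forall l : nat, (0 < l)%N -> n <> (3 * l - 1)%N)).
Proof.
pose A : 'M[R]_m := 9%:R^-1 *: tridiag_ones m.
have conv_unique B : (exists! X, conv3 box_blur X = B) <->
                     (exists! X, A *m X *m tridiag_ones n = B).
  split=> -[X [XB uniqX]]; exists X.
    by split=> [|Y YB]; [rewrite -conv3_box_blurE | apply: uniqX; rewrite conv3_box_blurE].
  by split=> [|Y YB]; [rewrite conv3_box_blurE | apply: uniqX; rewrite -conv3_box_blurE].
have unitA : (A \in unitmx) = (tridiag_ones m \in @unitmx R m).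
  by rewrite unitmxZ // unitfE invr_eq0 pnatr_eq0.
rewrite !modn3_neq2_iff -!(@unitmx_tridiag_ones R) -unitA -(exists_unique_mulmx2_iff _ _ Hm Hn).
by split=> bij B; apply/conv_unique; apply: bij.
Qed.
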